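(* There exist constants $C>0$ and $N$ such that for all integers $n\ge N$ and all $g\ge1$, \[0< s(n,g)\le \frac{C}{n^2}.\] That is, $s(n,g)=O(1/n^2)$ as $n\to\infty$, uniformly in $g$.
   Context: Define $\lambda:[0,\infty)\to(0,1/4]$ by $\lambda(0)=1/4$ and, for $\theta>0$, $\lambda(\theta)$ is the unique $\lambda\in(0,1/4)$ with $-1+\frac{\operatorname{artanh}(\sqrt{1-4\lambda})}{\sqrt{1-4\lambda}}=\theta$. For $\theta>0$ set $f(\theta)=-\ln\lambda(\theta)-2\theta-\theta\ln(1-4\lambda(\theta))$ and $j(\theta)=-\tfrac12\ln(1-4(\theta+1)\lambda(\theta))+\tfrac12\ln 2$. For integers $n\ge1$, $g\ge1$ let \[\Omega(n,g)=\frac{\sqrt g\,g^g}{\sqrt{2\pi}\,e^g\,g!}\,n^{2g-2}\exp\!\Big(nf\big(\tfrac gn\big)+j\big(\tfrac gn\big)\Big),\qquad \Omega(n,0)=\frac{4^n n^{-3/2}}{\sqrt{2\pi}},\] and $s(n,g)=\Omega(n,g-1)/\Omega(n,g)$ for $n,g\ge1$. *)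

From Stdlib Require Import Reals ClassicalEpsilon Arith Factorial.
Open Scope R_scope.

Definition artanh (x : R) : R := / 2 * ln ((1 + x) / (1 - x)).

Definition lam_eq (theta l : R) : Prop :=
  0 < l < / 4 /\
  -1 + artanh (sqrt (1 - 4 * l)) / sqrt (1 - 4 * l) = theta.

(* lambda(0) = 1/4; for theta > 0, the (unique) l in (0,1/4) solving lam_eq;
   chosen by Hilbert's epsilon (the paper asserts existence and uniqueness). *)
Definition lam (theta : R) : R :=
  if Req_EM_T theta 0 then / 4
  else epsilon (inhabits (/ 4)) (fun l => lam_eq theta l).

Definition f_fun (theta : R) : R :=
  - ln (lam theta) - 2 * theta - theta * ln (1 - 4 * lam theta).

Definition j_fun (theta : R) : R :=
  - / 2 * ln (1 - 4 * (theta + 1) * lam theta) + / 2 * ln 2.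

Definition Omega (n g : nat) : R :=
  match g with
  | O => 4 ^ n * / (INR n * sqrt (INR n)) / sqrt (2 * PI)
  | S _ =>
      let gr := INR g in
      let nr := INR n in
      sqrt gr * gr ^ g / (sqrt (2 * PI) * exp gr * INR (fact g))
      * nr ^ (2 * g - 2)
      * exp (nr * f_fun (gr / nr) + j_fun (gr / nr))
  end.

Definition s (n g : nat) : R := Omega n (g - 1) / Omega n g.

From Stdlib Require Import Reals Lra Lia Psatz Ranalysis5 ClassicalEpsilon Factorial.
From Coquelicot Require Import Coquelicot.
Open Scope R_scope.

(* Parametrize theta > 0 by x = sqrt (1 - 4 lambda(theta)) in (0,1): then
   theta = artanh x / x - 1 and lambda = (1 - x^2) / 4.  Everything follows from
   the two Taylor bounds x + x^3/3 <= artanh x <= (x - 2x^3/3) / (1 - x^2).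
   In this parametrization df/dtheta = -2 ln x >= 0 and f >= ln 4, while
   q = 1 - 4 (theta + 1) lambda, for which exp j = sqrt (2 / q), lies between
   min(theta, 1/3) and min(3 theta, 1).  For g >= 2 the quotient
   Omega(n,g-1) / Omega(n,g) is therefore at most e (ratio of the Stirling-type
   prefactors) times n^-2 times 1 (monotonicity of f) times sqrt 6 (from
   theta_g <= 2 theta_(g-1)); for g = 1 the bound f >= ln 4 absorbs 4^n and
   q(1/n) <= 3/n supplies the missing factor n^(-1/2). *)

Lemma le_of_is_derive_nonneg (phi dphi : R -> R) (a b : R) :
  a <= b ->
  (forall c, a <= c <= b -> is_derive phi c (dphi c)) ->
  (forall c, a < c < b -> 0 <= dphi c) ->
  phi a <= phi b.
Proof.
  intros Hab Hd Hpos.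
  destruct (Req_dec a b) as [<-|Hne]; [lra|].
  destruct (MVT_cor2 phi dphi a b) as [c [Hc Hcab]]; [lra| |].
  - intros c Hc. apply is_derive_Reals, Hd, Hc.
  - pose proof (Hpos c Hcab). nra.
Qed.

Lemma ln_le_sub_1 x : 0 < x -> ln x <= x - 1.
Proof. intros Hx. pose proof (exp_ineq1_le (ln x)). rewrite exp_ln in H; lra. Qed.

Lemma exp_le_compat x y : x <= y -> exp x <= exp y.
Proof.
  intros [Hlt|Heq]; [apply Rlt_le, exp_increasing, Hlt | rewrite Heq; apply Rle_refl].
Qed.

Lemma artanh_0 : artanh 0 = 0.
Proof. unfold artanh. replace ((1 + 0) / (1 - 0)) with 1 by field. rewrite ln_1; ring. Qed.

Lemma cubic_le_artanh x : 0 <= x < 1 -> x + x ^ 3 / 3 <= artanh x.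
Proof.
  intros Hx.
  set (phi t := artanh t - t - t ^ 3 / 3).
  assert (H : phi 0 <= phi x).
  { apply (le_of_is_derive_nonneg phi (fun t => t ^ 4 / ((1 - t) * (1 + t)))); [lra| |].
    - intros c Hc. unfold phi, artanh. auto_derive.
      + repeat split; try lra. apply Rdiv_lt_0_compat; lra.
      + field. repeat split; lra.
    - intros c Hc. apply Rdiv_le_0_compat; [nra|]. apply Rmult_lt_0_compat; lra. }
  unfold phi in H. rewrite artanh_0 in H. lra.
Qed.

Lemma one_sub_sqr_mul_artanh_le x :
  0 <= x < 1 -> (1 - x * x) * artanh x <= x - 2 * x ^ 3 / 3.
Proof.
  intros Hx.
  set (phi t := t - 2 * t ^ 3 / 3 - (1 - t * t) * artanh t).
  assert (H : phi 0 <= phi x).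
  { apply (le_of_is_derive_nonneg phi (fun t => 2 * t * (artanh t - t))); [lra| |].
    - intros c Hc. unfold phi, artanh. auto_derive.
      + repeat split; try lra. apply Rdiv_lt_0_compat; lra.
      + change ((1 + c) / (1 - c)) with ((1 + c) * / (1 + - c)). field. repeat split; lra.
    - intros c Hc. pose proof (cubic_le_artanh c ltac:(lra)). nra. }
  unfold phi in H. rewrite artanh_0 in H. lra.
Qed.

Definition theta_of (x : R) : R := artanh x / x - 1.

Lemma theta_of_lower x : 0 < x < 1 -> x * x / 3 <= theta_of x.
Proof.
  intros Hx. pose proof (cubic_le_artanh x ltac:(lra)).
  unfold theta_of. apply (Rmult_le_reg_r (3 * x)); [lra|].
  field_simplify; lra.
Qed.

Lemma theta_of_upper x : 0 < x < 1 -> theta_of x <= x * x / (3 * (1 - x * x)).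
Proof.
  intros Hx. pose proof (one_sub_sqr_mul_artanh_le x ltac:(lra)).
  unfold theta_of. apply (Rmult_le_reg_r (3 * x * (1 - x * x))); [nra|].
  field_simplify; nra.
Qed.

Definition dtheta_of (x : R) : R := (x - (1 - x * x) * artanh x) / (x * x * (1 - x * x)).

Lemma is_derive_theta_of x : 0 < x < 1 -> is_derive theta_of x (dtheta_of x).
Proof.
  intros Hx. unfold theta_of, dtheta_of, artanh. auto_derive.
  - repeat split; try lra. apply Rdiv_lt_0_compat; lra.
  - change ((1 + x) / (1 - x)) with ((1 + x) * / (1 + - x)). field. repeat split; nra.
Qed.

Lemma dtheta_of_nonneg x : 0 < x < 1 -> 0 <= dtheta_of x.
Proof.
  intros Hx. unfold dtheta_of. pose proof (one_sub_sqr_mul_artanh_le x ltac:(lra)).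
  apply Rdiv_le_0_compat; [nra|]. apply Rmult_lt_0_compat; nra.
Qed.

Lemma theta_of_le x y : 0 < x <= y -> y < 1 -> theta_of x <= theta_of y.
Proof.
  intros Hx Hy.
  apply (le_of_is_derive_nonneg theta_of dtheta_of); [lra| |].
  - intros c Hc. apply is_derive_theta_of. lra.
  - intros c Hc. apply dtheta_of_nonneg. lra.
Qed.

Lemma theta_of_surjective th : 0 < th -> exists x, 0 < x < 1 /\ theta_of x = th.
Proof.
  intros Hth.
  set (e := Rmin (/ 2) th).
  assert (He : 0 < e <= / 2 /\ e <= th).
  { unfold e. split; [split|]; [apply Rmin_pos; lra | apply Rmin_l | apply Rmin_r]. }
  assert (Hthe : theta_of e < th).
  { pose proof (theta_of_upper e ltac:(lra)).
    enough (e * e / (3 * (1 - e * e)) < e) by lra.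
    apply (Rmult_lt_reg_r (3 * (1 - e * e))); [nra|]. field_simplify; nra. }
  (* [y] solves [artanh y = th + 1], i.e. [y = tanh (th + 1)]. *)
  set (E := exp (2 * th + 2)).
  assert (HE : 1 < E) by (pose proof (exp_ineq1_le (2 * th + 2)); unfold E; lra).
  set (y := (E - 1) / (E + 1)).
  assert (Hy : 0 < y < 1).
  { unfold y. split; [apply Rdiv_lt_0_compat; lra|].
    apply (Rmult_lt_reg_r (E + 1)); [lra|]. field_simplify; lra. }
  assert (Hthy : th < theta_of y).
  { assert (artanh y = th + 1).
    { unfold artanh. replace ((1 + y) / (1 - y)) with E by (unfold y; field; lra).
      unfold E. rewrite ln_exp. field. }
    unfold theta_of. rewrite H. apply (Rmult_lt_reg_r y); [lra|]. field_simplify; nra. }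
  assert (Hey : e < y).
  { destruct (Rlt_or_le e y) as [|Hle]; [assumption|].
    pose proof (theta_of_le y e ltac:(lra) ltac:(lra)). lra. }
  destruct (IVT_interv (fun t => theta_of t - th) e y) as [z [Hz Hzth]]; try lra.
  - intros a Ha. apply continuity_pt_minus; [|apply continuity_pt_const; now intros ??].
    apply derivable_continuous_pt.
    exists (dtheta_of a). apply is_derive_Reals, is_derive_theta_of. lra.
  - exists z. split; lra.
Qed.

Lemma lam_param th : 0 < th ->
  exists x, 0 < x < 1 /\ theta_of x = th /\ lam th = (1 - x * x) / 4.
Proof.
  intros Hth. unfold lam. destruct (Req_EM_T th 0) as [|_]; [lra|].
  set (l := epsilon _ _).
  assert (Hl : lam_eq th l).
  { apply epsilon_spec. destruct (theta_of_surjective th Hth) as [x [Hx Hthx]].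
    exists ((1 - x * x) / 4). split; [split; nra|].
    replace (1 - 4 * ((1 - x * x) / 4)) with (x * x) by field.
    rewrite sqrt_square by lra. unfold theta_of in Hthx. lra. }
  destruct Hl as [Hl Hlth].
  set (x := sqrt (1 - 4 * l)) in *.
  assert (Hx2 : x * x = 1 - 4 * l) by (apply sqrt_sqrt; lra).
  assert (0 < x) by (apply sqrt_lt_R0; lra).
  exists x. unfold theta_of. repeat split; nra.
Qed.

Definition f_param (x : R) : R :=
  - ln ((1 - x * x) / 4) - 2 * theta_of x - 2 * theta_of x * ln x.

Lemma f_fun_param th x : 0 < x < 1 -> theta_of x = th -> lam th = (1 - x * x) / 4 ->
  f_fun th = f_param x.
Proof.
  intros Hx Hthx Hl. unfold f_fun, f_param. rewrite Hl, <- Hthx.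
  replace (1 - 4 * ((1 - x * x) / 4)) with (x * x) by field.
  rewrite ln_mult by lra. ring.
Qed.

(* Since [theta_of' + theta_of / x = x / (1 - x^2)], the derivative of [f_param]
   collapses to [-2 ln x * theta_of'], i.e. [df / dtheta = -2 ln x]. *)
Lemma f_param_le x y : 0 < x <= y -> y < 1 -> f_param x <= f_param y.
Proof.
  intros Hx Hy.
  apply (le_of_is_derive_nonneg f_param (fun t => - 2 * ln t * dtheta_of t)); [lra| |].
  - intros c Hc. unfold f_param, theta_of, dtheta_of, artanh. auto_derive.
    + repeat split; try lra; try (apply Rdiv_lt_0_compat; lra).
      apply Rmult_lt_0_compat; nra.
    + change ((1 + c) / (1 - c)) with ((1 + c) * / (1 + - c)). field. repeat split; nra.
  - intros c Hc.
    assert (ln c < 0) by (rewrite <- ln_1; apply ln_increasing; lra).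
    pose proof (dtheta_of_nonneg c ltac:(lra)). nra.
Qed.

Lemma ln4_le_f_param x : 0 < x < 1 -> ln 4 <= f_param x.
Proof.
  intros Hx. unfold f_param.
  pose proof (theta_of_lower x Hx).
  pose proof (ln_le_sub_1 x ltac:(lra)).
  pose proof (ln_le_sub_1 (1 + x) ltac:(lra)).
  assert (Hthx : theta_of x * x = artanh x - x) by (unfold theta_of; field; lra).
  assert (Hartanh : 2 * artanh x = ln (1 + x) - ln (1 - x)).
  { unfold artanh. rewrite ln_div by lra. field. }
  replace (1 - x * x) with ((1 - x) * (1 + x)) by ring.
  rewrite ln_div, ln_mult by nra.
  nra.
Qed.

Lemma ln4_le_f_fun th : 0 < th -> ln 4 <= f_fun th.
Proof.
  intros Hth. destruct (lam_param th Hth) as [x [Hx [Hthx Hl]]].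
  rewrite (f_fun_param th x Hx Hthx Hl). apply ln4_le_f_param, Hx.
Qed.

Lemma f_fun_le th0 th1 : 0 < th0 <= th1 -> f_fun th0 <= f_fun th1.
Proof.
  intros Hth.
  destruct (lam_param th0 ltac:(lra)) as [y [Hy [Hthy Hly]]].
  destruct (lam_param th1 ltac:(lra)) as [x [Hx [Hthx Hlx]]].
  destruct (Rle_or_lt y x) as [Hyx|Hxy].
  - rewrite (f_fun_param th0 y Hy Hthy Hly), (f_fun_param th1 x Hx Hthx Hlx).
    apply f_param_le; lra.
  - pose proof (theta_of_le x y ltac:(lra) ltac:(lra)).
    replace th1 with th0 by lra. lra.
Qed.

Definition j_arg (th : R) : R := 1 - 4 * (th + 1) * lam th.

Lemma j_arg_bounds th : 0 < th -> Rmin th (/ 3) <= j_arg th <= Rmin (3 * th) 1.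
Proof.
  intros Hth. destruct (lam_param th Hth) as [x [Hx [Hthx Hl]]].
  assert (Hq : j_arg th = 1 - (theta_of x + 1) * (1 - x * x)).
  { unfold j_arg. rewrite Hl, Hthx. field. }
  pose proof (theta_of_lower x Hx).
  pose proof (theta_of_upper x Hx).
  pose proof (one_sub_sqr_mul_artanh_le x ltac:(lra)).
  assert (Hart : (theta_of x + 1) * x = artanh x) by (unfold theta_of; field; lra).
  assert (Hq_lower : 2 * (x * x) / 3 <= j_arg th).
  { rewrite Hq. apply (Rmult_le_reg_r x); [lra|]. nra. }
  assert (Hq_upper : j_arg th <= x * x).
  { assert (0 <= theta_of x * (1 - x * x)) by (apply Rmult_le_pos; nra).
    rewrite Hq. nra. }
  split.
  - destruct (Rle_or_lt (x * x) (/ 2)) as [Hsmall|Hlarge].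
    + apply Rle_trans with th; [apply Rmin_l|].
      enough (x * x / (3 * (1 - x * x)) <= 2 * (x * x) / 3) by lra.
      apply (Rmult_le_reg_r (3 * (1 - x * x))); [nra|]. field_simplify; nra.
    + apply Rle_trans with (/ 3); [apply Rmin_r | lra].
  - apply Rmin_glb; nra.
Qed.

Lemma j_arg_pos th : 0 < th -> 0 < j_arg th.
Proof.
  intros Hth. destruct (j_arg_bounds th Hth) as [Hlow _].
  eapply Rlt_le_trans; [|exact Hlow]. apply Rmin_pos; lra.
Qed.

Lemma j_arg_le_6 th0 th1 : 0 < th0 -> th0 <= th1 <= 2 * th0 -> j_arg th1 <= 6 * j_arg th0.
Proof.
  intros Hth0 Hth1.
  destruct (j_arg_bounds th0 Hth0) as [Hlow _].
  destruct (j_arg_bounds th1 ltac:(lra)) as [_ Hup].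
  destruct (Rle_or_lt th0 (/ 3)) as [Hs|Hl].
  - rewrite Rmin_left in Hlow by lra. pose proof (Rmin_l (3 * th1) 1). lra.
  - rewrite Rmin_right in Hlow by lra. pose proof (Rmin_r (3 * th1) 1). lra.
Qed.

Lemma exp_j_fun th : 0 < th -> exp (j_fun th) = sqrt (2 / j_arg th).
Proof.
  intros Hth. pose proof (j_arg_pos th Hth).
  rewrite <- Rpower_sqrt by (apply Rdiv_lt_0_compat; lra).
  unfold Rpower, j_fun. rewrite ln_div by lra. fold (j_arg th). f_equal. ring.
Qed.

Lemma exp_j_fun_le th0 th1 : 0 < th0 -> th0 <= th1 <= 2 * th0 ->
  exp (j_fun th0) <= 3 * exp (j_fun th1).
Proof.
  intros Hth0 Hth1.
  pose proof (j_arg_pos th0 Hth0). pose proof (j_arg_pos th1 ltac:(lra)).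
  pose proof (j_arg_le_6 th0 th1 Hth0 Hth1).
  rewrite !exp_j_fun by lra.
  replace 3 with (sqrt 9) by (rewrite <- (sqrt_square 3) by lra; f_equal; ring).
  rewrite <- sqrt_mult by (try apply Rlt_le, Rdiv_lt_0_compat; lra).
  apply sqrt_le_1_alt. apply (Rmult_le_reg_r (j_arg th0 * j_arg th1)); [nra|].
  field_simplify; nra.
Qed.

Definition stirling_coef (g : nat) : R :=
  sqrt (INR g) * INR g ^ g / (sqrt (2 * PI) * exp (INR g) * INR (fact g)).

Lemma sqrt_2PI_pos : 0 < sqrt (2 * PI).
Proof. apply sqrt_lt_R0. pose proof PI_RGT_0. lra. Qed.

Lemma stirling_coef_pos g : (1 <= g)%nat -> 0 < stirling_coef g.
Proof.
  intros Hg. unfold stirling_coef. assert (0 < INR g) by (apply lt_0_INR; lia).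
  pose proof sqrt_2PI_pos. pose proof (lt_INR 0 _ (lt_O_fact g)).
  apply Rdiv_lt_0_compat.
  - apply Rmult_lt_0_compat; [apply sqrt_lt_R0 | apply pow_lt]; lra.
  - repeat apply Rmult_lt_0_compat; simpl in *; try lra. apply exp_pos.
Qed.

Lemma stirling_coef_le g : stirling_coef g <= exp 1 * stirling_coef (S g).
Proof.
  unfold stirling_coef.
  set (a := INR g). set (b := INR (S g)).
  assert (Hb : b = a + 1) by apply S_INR.
  assert (Ha : 0 <= a) by apply pos_INR.
  rewrite (fact_simpl g), mult_INR. fold b.
  replace (exp b) with (exp 1 * exp a) by (rewrite Hb, exp_plus; ring).
  change (b ^ S g) with (b * b ^ g).
  pose proof sqrt_2PI_pos. pose proof (lt_INR 0 _ (lt_O_fact g)).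
  pose proof (exp_pos 1). pose proof (exp_pos a).
  replace (exp 1 * (sqrt b * (b * b ^ g) / (sqrt (2 * PI) * (exp 1 * exp a) * (b * INR (fact g)))))
    with (sqrt b * b ^ g / (sqrt (2 * PI) * exp a * INR (fact g)))
    by (field; simpl in *; repeat split; lra).
  unfold Rdiv. apply Rmult_le_compat_r.
  - apply Rlt_le, Rinv_0_lt_compat. simpl in *. repeat apply Rmult_lt_0_compat; lra.
  - apply Rmult_le_compat; [apply sqrt_pos | apply pow_le; lra | |].
    + apply sqrt_le_1_alt. lra.
    + apply pow_incr. lra.
Qed.

Lemma Omega_succ n m : Omega n (S m) =
  stirling_coef (S m) * INR n ^ (2 * m) *
  exp (INR n * f_fun (INR (S m) / INR n)) * exp (j_fun (INR (S m) / INR n)).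
Proof.
  unfold Omega, stirling_coef. cbv zeta. rewrite exp_plus.
  replace (2 * S m - 2)%nat with (2 * m)%nat by lia. ring.
Qed.

Lemma Omega_pos n g : (1 <= n)%nat -> 0 < Omega n g.
Proof.
  intros Hn. assert (0 < INR n) by (apply lt_0_INR; lia).
  destruct g as [|m].
  - unfold Omega. pose proof sqrt_2PI_pos.
    assert (0 < sqrt (INR n)) by (apply sqrt_lt_R0; lra).
    apply Rdiv_lt_0_compat; [|lra]. apply Rmult_lt_0_compat; [apply pow_lt; lra|].
    apply Rinv_0_lt_compat. nra.
  - rewrite Omega_succ.
    apply Rmult_lt_0_compat; [|apply exp_pos].
    apply Rmult_lt_0_compat; [|apply exp_pos].
    apply Rmult_lt_0_compat; [apply stirling_coef_pos; lia | apply pow_lt; lra].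
Qed.

Lemma s_succ_succ_le n m : (1 <= n)%nat -> s n (S (S m)) <= 9 / INR n ^ 2.
Proof.
  intros Hn. assert (Hn0 : 0 < INR n) by (apply lt_0_INR; lia).
  unfold s. replace (S (S m) - 1)%nat with (S m) by lia.
  apply Rle_div_l; [apply Omega_pos, Hn|].
  rewrite !Omega_succ.
  set (th0 := INR (S m) / INR n). set (th1 := INR (S (S m)) / INR n).
  assert (Hth0 : 0 < th0) by (apply Rdiv_lt_0_compat; [apply lt_0_INR; lia | lra]).
  assert (Hth : th0 <= th1 <= 2 * th0).
  { unfold th0, th1. rewrite !S_INR. pose proof (pos_INR m).
    split; apply Rmult_le_reg_r with (INR n); try lra; field_simplify; lra. }
  set (c0 := stirling_coef (S m)). set (c1 := stirling_coef (S (S m))).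
  set (P := INR n ^ (2 * m)).
  set (A0 := exp (INR n * f_fun th0)). set (A1 := exp (INR n * f_fun th1)).
  set (B0 := exp (j_fun th0)). set (B1 := exp (j_fun th1)).
  assert (Hc : c0 <= exp 1 * c1) by apply stirling_coef_le.
  assert (HA : A0 <= A1).
  { apply exp_le_compat, Rmult_le_compat_l; [lra|]. apply f_fun_le. lra. }
  assert (HB : B0 <= 3 * B1) by (apply exp_j_fun_le; assumption).
  assert (0 < c0) by (apply stirling_coef_pos; lia).
  assert (0 < P) by (apply pow_lt; lra).
  assert (0 < A0) by apply exp_pos. assert (0 < B0) by apply exp_pos.
  assert (0 < c1) by (apply stirling_coef_pos; lia).
  assert (0 < A1) by apply exp_pos. assert (0 < B1) by apply exp_pos.
  assert (0 < c1 * P * A1 * B1)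
    by (apply Rmult_lt_0_compat; [apply Rmult_lt_0_compat; [apply Rmult_lt_0_compat|]|]; lra).
  replace (2 * S m)%nat with (2 * m + 2)%nat by lia. rewrite pow_add. fold P.
  apply Rle_trans with (exp 1 * c1 * P * A1 * (3 * B1)).
  - apply Rmult_le_compat; [| lra | | exact HB].
    + apply Rmult_le_pos; [apply Rmult_le_pos|]; lra.
    + apply Rmult_le_compat; [apply Rmult_le_pos; lra | lra | | exact HA].
      apply Rmult_le_compat; lra.
  - pose proof exp_le_3.
    replace (9 / INR n ^ 2 * (c1 * (P * INR n ^ 2) * A1 * B1))
      with (9 * (c1 * P * A1 * B1)) by (field; lra).
    nra.
Qed.

Lemma stirling_coef_1 : stirling_coef 1 = / (sqrt (2 * PI) * exp 1).
Proof.
  unfold stirling_coef. simpl INR. rewrite sqrt_1. simpl.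
  pose proof sqrt_2PI_pos. pose proof (exp_pos 1). field. lra.
Qed.

Lemma sqrt_mul_exp_j_fun_ge n : (1 <= n)%nat ->
  INR n / 2 <= sqrt (INR n) * exp (j_fun (1 / INR n)).
Proof.
  intros Hn. assert (Hn0 : 0 < INR n) by (apply lt_0_INR; lia).
  assert (Hth : 0 < 1 / INR n) by (apply Rdiv_lt_0_compat; lra).
  pose proof (j_arg_pos _ Hth) as Hq0.
  assert (Hq : j_arg (1 / INR n) * INR n <= 3).
  { destruct (j_arg_bounds _ Hth) as [_ Hup].
    pose proof (Rmin_l (3 * (1 / INR n)) 1).
    apply Rle_trans with (3 * (1 / INR n) * INR n).
    - apply Rmult_le_compat_r; lra.
    - right. field. lra. }
  rewrite exp_j_fun, <- sqrt_mult_alt by lra.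
  rewrite <- (sqrt_pow2 (INR n / 2)) by lra.
  apply sqrt_le_1_alt.
  apply (Rmult_le_reg_r (j_arg (1 / INR n))); [lra|].
  replace (INR n * (2 / j_arg (1 / INR n)) * j_arg (1 / INR n)) with (2 * INR n) by (field; lra).
  nra.
Qed.

Lemma s_one_le n : (1 <= n)%nat -> s n 1 <= 9 / INR n ^ 2.
Proof.
  intros Hn. assert (Hn0 : 0 < INR n) by (apply lt_0_INR; lia).
  unfold s. apply Rle_div_l; [apply Omega_pos, Hn|].
  rewrite Omega_succ, stirling_coef_1. unfold Omega.
  change (INR 1) with 1.
  set (A := exp (INR n * f_fun (1 / INR n))). set (B := exp (j_fun (1 / INR n))).
  set (M := / (INR n * sqrt (INR n)) / sqrt (2 * PI)).
  pose proof sqrt_2PI_pos. pose proof exp_le_3. pose proof (exp_pos 1).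
  assert (0 < sqrt (INR n)) by (apply sqrt_lt_R0; lra).
  assert (HM : 0 < M).
  { unfold M. apply Rdiv_lt_0_compat; [apply Rinv_0_lt_compat|]; nra. }
  assert (HA : 4 ^ n <= A).
  { rewrite <- Rpower_pow by lra. apply exp_le_compat, Rmult_le_compat_l; [lra|].
    apply ln4_le_f_fun, Rdiv_lt_0_compat; lra. }
  assert (Hfac : 1 <= 9 / (exp 1 * INR n) * (sqrt (INR n) * B)).
  { pose proof (sqrt_mul_exp_j_fun_ge n Hn).
    apply Rle_trans with (9 / (exp 1 * INR n) * (INR n / 2)).
    - replace (9 / (exp 1 * INR n) * (INR n / 2)) with (9 / (2 * exp 1)) by (field; lra).
      apply (Rmult_le_reg_r (2 * exp 1)); [lra|]. field_simplify; lra.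
    - apply Rmult_le_compat_l; [|assumption].
      apply Rlt_le, Rdiv_lt_0_compat; nra. }
  replace (9 / INR n ^ 2 * (/ (sqrt (2 * PI) * exp 1) * INR n ^ (2 * 0) * A * B))
    with (9 / (exp 1 * INR n) * (sqrt (INR n) * B) * (A * M))
    by (unfold M; simpl; field; repeat split; lra).
  replace (4 ^ n * / (INR n * sqrt (INR n)) / sqrt (2 * PI)) with (4 ^ n * M)
    by (unfold M, Rdiv; ring).
  apply Rle_trans with (A * M); [apply Rmult_le_compat_r; lra|].
  assert (0 < A * M) by (apply Rmult_lt_0_compat; [apply exp_pos | exact HM]).
  nra.
Qed.

Theorem proposition8 :
  exists (C : R) (N : nat), 0 < C /\
    forall n g : nat, (N <= n)%nat -> (1 <= g)%nat ->
      0 < s n g /\ s n g <= C / (INR n ^ 2).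
Proof.
  exists 9, 1%nat. split; [lra|].
  intros n g Hn Hg. split.
  - apply Rdiv_lt_0_compat; apply Omega_pos, Hn.
  - destruct g as [|[|m]]; [lia | apply s_one_le, Hn | apply s_succ_succ_le, Hn].
Qed.
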